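(* Let $S\subseteq M_n$ be a noncommutative graph. Then $\alpha(S)\leq\Theta(S)\leq\mathcal{H}(S)\leq\overline{\xi}(S)$.
   Context: All scalars are complex; $M_{n\times m}$ denotes complex $n\times m$ matrices and $M_n=M_{n\times n}$. A noncommutative graph is a linear subspace $S\subseteq M_n$ that contains $I_n$ and is closed under conjugate transpose. The independence number $\alpha(S)$ is the maximum $\ell$ for which there exist nonzero vectors $\ket{\psi_1},\dots,\ket{\psi_\ell}\in\mathbb{C}^n$ with $\bra{\psi_i}A\ket{\psi_j}=0$ for all distinct $i,j\in[\ell]$ and all $A\in S$. With $S\otimes T=\mathrm{span}\{A\otimes B:A\in S,B\in T\}$ and $S^{\otimes k}$ the $k$-fold tensor power, the Shannon capacity is $\Theta(S)=\sup_k\sqrt[k]{\alpha(S^{\otimes k})}$. For a subspace $S\subseteq M_n$, $M_m(S)$ denotes the set of $m\times m$ block matrices $B=[B_{i,j}]_{i,j\in[m]}$ with every block $B_{i,j}\in S$, viewed as elements of $M_{mn}$. The Haemers bound is $\mathcal{H}(S)=\min\{\mathrm{rk}(B):\ m\in\mathbb{N},\ B\in M_m(S),\ \sum_{i=1}^m B_{i,i}=I_n\}$. A quantum channel $\Phi:M_n\to M_k$ is a map $\Phi(A)=\sum_{i=1}^m E_iAE_i^\dagger$ with $E_i\in M_{k\times n}$ and $\sum_i E_i^\dagger E_i=I_n$; its noncommutative graph is $S_\Phi=\mathrm{span}\{E_i^\dagger E_j: i,j\in[m]\}$. The orthogonal rank is $\overline{\xi}(S)=\min\{k:\ \text{there is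 a quantum channel }\Phi:M_n\to M_k \text{ with } S_\Phi\subseteq S\}$. *)

From HB Require Import structures.
From mathcomp Require Import all_boot all_order all_algebra.
From mathcomp Require Import classical_sets boolp reals ereal exp.
From mathcomp.real_closed Require Import complex mxtens.

Set Implicit Arguments.
Unset Strict Implicit.
Unset Printing Implicit Defensive.

Import Order.TTheory GRing.Theory Num.Theory.
Local Open Scope ring_scope.
Local Open Scope complex_scope.

Section NCGraph.
Variable R : realType.
Local Notation C := R[i].

Definition ctr {m p : nat} (A : 'M[C]_(m, p)) : 'M[C]_(p, m) :=
  (map_mx (@conjc R) A)^T.

Definition nc_graph {n : nat} (S : {vspace 'M[C]_n}) : Prop :=
  (1%:M \in S) /\ (forall A, A \in S -> ctr A \in S).

(** S (x) T = span { A (x) B : A in S, B in T } (spanned by basis tensors) *)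
Definition tens_vs {n p : nat} (S : {vspace 'M[C]_n}) (T : {vspace 'M[C]_p})
  : {vspace 'M[C]_(n * p)} :=
  <<[seq A *t B | A <- vbasis S, B <- vbasis T]>>%VS.

(** tpow S k = S^{(x)(k+1)}, the (k+1)-fold tensor power, in M_(n^(k+1)) *)
Fixpoint tpow {n : nat} (S : {vspace 'M[C]_n}) (k : nat)
  : {vspace 'M[C]_(n ^ k.+1)} :=
  if k is k'.+1 then tens_vs S (tpow S k') else S.

Definition indep_family {n : nat} (S : {vspace 'M[C]_n}) (l : nat) : Prop :=
  exists psi : 'I_l -> 'cV[C]_n,
    (forall i, psi i != 0) /\
    (forall i j, i != j -> forall A, A \in S -> ctr (psi i) *m A *m psi j = 0).

Local Open Scope ereal_scope.

(** independence number (maximum, expressed as a supremum in \bar R) *)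
Definition alpha {n : nat} (S : {vspace 'M[C]_n}) : \bar R :=
  ereal_sup [set (l%:R)%:E | l in [set l | indep_family S l]].

(** Shannon capacity: sup_{k >= 1} alpha(S^{(x)k})^{1/k} *)
Definition shannon_cap {n : nat} (S : {vspace 'M[C]_n}) : \bar R :=
  ereal_sup [set poweR (alpha (tpow S k)) (k.+1%:R^-1)%R | k in [set: nat]].

Definition haemers_feasible {n : nat} (S : {vspace 'M[C]_n}) (r : nat) : Prop :=
  exists (m : nat) (B : 'I_m -> 'I_m -> 'M[C]_n),
    (forall i j, B i j \in S) /\
    (\sum_(i < m) B i i = 1%:M)%R /\
    \rank (\mxblock_(i < m, j < m) B i j) = r.

(** Haemers bound (minimum, expressed as an infimum in \bar R) *)
Definition haemers {n : nat} (S : {vspace 'M[C]_n}) : \bar R :=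
  ereal_inf [set (r%:R)%:E | r in [set r | haemers_feasible S r]].

Definition kraus_tp {n k m : nat} (E : 'I_m -> 'M[C]_(k, n)) : Prop :=
  (\sum_(i < m) ctr (E i) *m E i = 1%:M)%R.

Definition channel_graph {n k m : nat} (E : 'I_m -> 'M[C]_(k, n))
  : {vspace 'M[C]_n} :=
  <<[seq ctr (E i) *m E j | i <- enum 'I_m, j <- enum 'I_m]>>%VS.

(** orthogonal rank (minimum, expressed as an infimum in \bar R) *)
Definition orth_rank {n : nat} (S : {vspace 'M[C]_n}) : \bar R :=
  ereal_inf [set (k%:R)%:E | k in
    [set k | exists (m : nat) (E : 'I_m -> 'M[C]_(k, n)),
               kraus_tp E /\ (channel_graph E <= S)%VS]].

End NCGraph.

From HB Require Import structures.
From mathcomp Require Import all_boot all_order all_algebra.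
From mathcomp Require Import classical_sets boolp reals ereal exp.
From mathcomp.real_closed Require Import complex mxtens.

Set Implicit Arguments.
Unset Strict Implicit.
Unset Printing Implicit Defensive.

Import Order.TTheory GRing.Theory Num.Theory.
Local Open Scope ring_scope.

(* [alpha <= shannon_cap] is the term [k = 1] of the supremum.  For
   [shannon_cap <= haemers], let [B] be feasible for the Haemers bound and
   [psi_1, ..., psi_l] independent.  Since [sum_a psi_i^* B_aa psi_i] is
   [|psi_i|^2 <> 0], some block [a(i)] has [psi_i^* B_a(i)a(i) psi_i <> 0];
   compressing [B] on both sides by the vectors [psi_i] placed in block [a(i)]
   gives an [l x l] matrix that is diagonal by independence and has nonzero
   diagonal, so [l <= rk B].  Feasible matrices tensor to feasible matrices
   and ranks multiply, hence [alpha (S^(x)k) <= rk(B)^k].  Finally, Kraus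
   operators [E_i : C^n -> C^k] give the feasible block matrix
   [E_i^dag E_j] = [col (E_i^dag) * row (E_j)], of rank at most [k], so
   [haemers <= orth_rank]. *)

Section BlockMatrixRank.
Variable F : fieldType.

Lemma mxrank_mxblock_mul (m n k : nat) (U : 'I_m -> 'M[F]_(n, k))
    (V : 'I_m -> 'M[F]_(k, n)) :
  (\rank (\mxblock_(i < m, j < m) (U i *m V j)) <= k)%N.
Proof. by rewrite -mul_mxcol_mxrow mulmx_max_rank. Qed.

Lemma mxblock_rank_factor (m n : nat) (B : 'I_m -> 'I_m -> 'M[F]_n) :
  exists (U : 'I_m -> 'M[F]_(n, \rank (\mxblock_(i < m, j < m) B i j)))
         (V : 'I_m -> 'M[F]_(\rank (\mxblock_(i < m, j < m) B i j), n)),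
    forall i j, B i j = U i *m V j.
Proof.
set M := \mxblock_(i, j) B i j.
exists (submxcol (col_base M)), (submxrow (row_base M)) => i j.
have : M = \mxcol_i submxcol (col_base M) i *m \mxrow_j submxrow (row_base M) j.
  by rewrite submxcolK submxrowK mulmx_base.
by rewrite mul_mxcol_mxrow => /(congr1 (fun A => submxblock A i j)); rewrite !mxblockK.
Qed.

Lemma sumr_delta_mul (m : nat) (x : 'I_m) (g : 'I_m -> F) :
  \sum_a (a == x)%:R * g a = g x.
Proof.
rewrite (bigD1 x) //= eqxx mul1r big1 ?addr0 // => a /negbTE ->; exact: mul0r.
Qed.

Lemma mxrank_mxblock_compress (m n l : nat) (B : 'I_m -> 'I_m -> 'M[F]_n)
    (f : 'I_l -> 'I_m) (u : 'I_l -> 'rV[F]_n) (v : 'I_l -> 'cV[F]_n) :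
  (forall i j, i != j -> (u i *m B (f i) (f j) *m v j) 0 0 = 0) ->
  (forall i, (u i *m B (f i) (f i) *m v i) 0 0 != 0) ->
  (l <= \rank (\mxblock_(a < m, b < m) B a b))%N.
Proof.
move=> offdiag ondiag.
pose d a : 'rV[F]_l := \row_i (a == f i)%:R.
have dE a i : d a 0 i = (a == f i)%:R by rewrite mxE.
pose D a := diag_mx (d a).
pose U := \matrix_(i, k) u i 0 k; pose V := \matrix_(k, j) v j k 0.
pose X := \mxrow_a (D a *m U); pose Y := \mxcol_b (V *m D b).
pose g := \row_i (u i *m B (f i) (f i) *m v i) 0 0.
have UBV a b i j : (U *m B a b *m V) i j = (u i *m B a b *m v j) 0 0.
  rewrite !mxE; apply: eq_bigr => k _; rewrite !mxE; congr (_ * _).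
  by apply: eq_bigr => k' _; rewrite !mxE.
have XBY : X *m \mxblock_(a, b) B a b *m Y = diag_mx g.
  rewrite mul_mxrow_mxblock mul_mxrow_mxcol; apply/matrixP => i j; rewrite summxE.
  under eq_bigr => b _ do rewrite mulmx_suml summxE.
  under eq_bigr => b _ do under eq_bigr => a _ do
    rewrite !mulmxA mul_mx_diag mxE -!mulmxA mul_diag_mx mxE !mulmxA UBV !dE.
  under eq_bigr => b _ do rewrite -mulr_suml sumr_delta_mul mulrC.
  rewrite sumr_delta_mul [diag_mx _ _ _]mxE.
  case: eqVneq => [<-|ij]; first by rewrite mulr1n [g _ _]mxE.
  by rewrite mulr0n offdiag.
have g_unit : diag_mx g \in unitmx.
  by rewrite unitmxE det_diag unitfE; apply/prodf_neq0 => i _; rewrite mxE.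
by rewrite -(mxrank_unit g_unit) -XBY (leq_trans (mxrankM_maxl _ _)) ?mxrankM_maxr.
Qed.
End BlockMatrixRank.

Section Tensor.
Variable F : comPzRingType.

Lemma tensmxDl (m n p q : nat) (A1 A2 : 'M[F]_(m, n)) (B : 'M[F]_(p, q)) :
  (A1 + A2) *t B = A1 *t B + A2 *t B.
Proof. by apply/matrixP => i j; rewrite !mxE mulrDl. Qed.

Lemma tensmxDr (m n p q : nat) (A : 'M[F]_(m, n)) (B1 B2 : 'M[F]_(p, q)) :
  A *t (B1 + B2) = A *t B1 + A *t B2.
Proof. by apply/matrixP => i j; rewrite !mxE mulrDr. Qed.

Lemma tensmxZl (m n p q : nat) (c : F) (A : 'M[F]_(m, n)) (B : 'M[F]_(p, q)) :
  (c *: A) *t B = c *: (A *t B).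
Proof. by apply/matrixP => i j; rewrite !mxE mulrA. Qed.

Lemma tensmxZr (m n p q : nat) (c : F) (A : 'M[F]_(m, n)) (B : 'M[F]_(p, q)) :
  A *t (c *: B) = c *: (A *t B).
Proof. by apply/matrixP => i j; rewrite !mxE mulrCA. Qed.

Lemma tensmx_suml (I : Type) (r : seq I) (P : pred I) (m n p q : nat)
    (A : I -> 'M[F]_(m, n)) (B : 'M[F]_(p, q)) :
  (\sum_(i <- r | P i) A i) *t B = \sum_(i <- r | P i) A i *t B.
Proof. by elim/big_rec2: _ => [|i C D _ <-]; rewrite ?tens0mx ?tensmxDl. Qed.

Lemma tensmx_sumr (I : Type) (r : seq I) (P : pred I) (m n p q : nat)
    (A : 'M[F]_(m, n)) (B : I -> 'M[F]_(p, q)) :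
  A *t (\sum_(i <- r | P i) B i) = \sum_(i <- r | P i) A *t B i.
Proof. by elim/big_rec2: _ => [|i C D _ <-]; rewrite ?tensmx0 ?tensmxDr. Qed.

Lemma tensmx_sum (k k' m n p q : nat) (A : 'I_k -> 'M[F]_(m, n))
    (B : 'I_k' -> 'M[F]_(p, q)) :
  (\sum_i A i) *t (\sum_j B j) =
  \sum_(x < k * k') A (mxtens_unindex x).1 *t B (mxtens_unindex x).2.
Proof.
rewrite tensmx_suml; under eq_bigr do rewrite tensmx_sumr; rewrite pair_big /=.
rewrite (reindex (@mxtens_unindex k k')) //.
by exists (@mxtens_index k k') => x _; rewrite (mxtens_indexK, mxtens_unindexK).
Qed.

Lemma tensmx11 (m p : nat) : (1%:M : 'M[F]_m) *t (1%:M : 'M[F]_p) = 1%:M.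
Proof.
apply/matrixP => x y.
case: (mxtens_indexP x) => i j; case: (mxtens_indexP y) => k l.
rewrite tensmxE !mxE -natrM mulnb; congr (nat_of_bool _)%:R.
apply/andP/eqP => [[/eqP-> /eqP->] //|/(can_inj (@mxtens_indexK m p))].
by case=> -> ->.
Qed.

End Tensor.

Section NCGraphBounds.
Variable R : realType.
Local Notation C := R[i].

Lemma memv_tens (n p : nat) (S : {vspace 'M[C]_n}) (T : {vspace 'M[C]_p}) A B :
  A \in S -> B \in T -> A *t B \in tens_vs S T.
Proof.
move=> AS BT; rewrite (coord_vbasis AS) (coord_vbasis BT) tensmx_suml.
apply: memv_suml => i _; rewrite tensmxZl tensmx_sumr; apply/memvZ/memv_suml => j _.
rewrite tensmxZr; apply/memvZ/memv_span.
by apply: (allpairs_f (@tensmx _ _ _ _ _)); rewrite mem_nth ?size_tuple.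
Qed.

Lemma haemers_feasible_tens (n p : nat) (S : {vspace 'M[C]_n})
    (T : {vspace 'M[C]_p}) (r r' : nat) :
  haemers_feasible S r -> haemers_feasible T r' ->
  exists2 r'', haemers_feasible (tens_vs S T) r'' & (r'' <= r * r')%N.
Proof.
case=> m [B [BS [Bsum <-]]]; case=> m' [B' [BS' [Bsum' <-]]].
have [U [V UV]] := mxblock_rank_factor B.
have [U' [V' UV']] := mxblock_rank_factor B'.
pose B2 x y := B (mxtens_unindex x).1 (mxtens_unindex y).1
            *t B' (mxtens_unindex x).2 (mxtens_unindex y).2.
exists (\rank (\mxblock_(x < m * m', y < m * m') B2 x y)).
  exists (m * m')%N, B2; split; first by move=> x y; apply: memv_tens.
  by rewrite -tensmx11 -Bsum -Bsum' tensmx_sum.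
have -> : \mxblock_(x, y) B2 x y =
    \mxblock_(x, y) ((U (mxtens_unindex x).1 *t U' (mxtens_unindex x).2)
                  *m (V (mxtens_unindex y).1 *t V' (mxtens_unindex y).2)).
  by apply: eq_mxblock => x y; rewrite tensmx_mul -UV -UV'.
exact: mxrank_mxblock_mul.
Qed.

Lemma haemers_feasible_tpow (n : nat) (S : {vspace 'M[C]_n}) (r k : nat) :
  haemers_feasible S r ->
  exists2 r', haemers_feasible (tpow S k) r' & (r' <= r ^ k.+1)%N.
Proof.
move=> Sr; elim: k => [|k [r' Sr' le_r']]; first by exists r; rewrite ?expn1.
have [r'' Sr'' le_r''] := haemers_feasible_tens Sr Sr'.
by exists r'' => //; rewrite (leq_trans le_r'') // expnS leq_mul2l le_r' orbT.
Qed.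

Lemma ctr_mulmx_self_neq0 (n : nat) (v : 'cV[C]_n) :
  v != 0 -> (ctr v *m v) 0 0 != 0.
Proof.
have -> : (ctr v *m v) 0 0 = \sum_k `|v k 0| ^+ 2.
  by rewrite mxE; apply: eq_bigr => k _; rewrite sqr_normc !mxE mulrC.
apply: contraNN => /eqP sum0; apply/eqP/matrixP => k z; rewrite [z]ord1 mxE.
have := psumr_eq0P (fun k _ => exprn_ge0 2 (normr_ge0 (v k 0))) sum0 (i := k) isT.
by move/eqP; rewrite sqrf_eq0 normr_eq0 => /eqP.
Qed.

Lemma indep_family_le_haemers (n : nat) (S : {vspace 'M[C]_n}) (l r : nat) :
  indep_family S l -> haemers_feasible S r -> (l <= r)%N.
Proof.
case=> psi [psi_nz psi_orth]; case=> m [B [BS [Bsum <-]]].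
have diag_nz i : exists a, (ctr (psi i) *m B a a *m psi i) 0 0 != 0.
  apply/existsP; apply: contraR (ctr_mulmx_self_neq0 (psi_nz i)).
  move=> /existsPn B_null; apply/eqP.
  rewrite -[ctr (psi i)]mulmx1 -Bsum mulmx_sumr mulmx_suml summxE.
  by apply: big1 => a _; apply/eqP/negPn.
have [f f_nz] := choice diag_nz.
apply: (mxrank_mxblock_compress (u := fun i => ctr (psi i)) (v := psi)) f_nz.
by move=> i j ij; rewrite psi_orth ?mxE.
Qed.

Lemma haemers_feasible_channel (n k m : nat) (S : {vspace 'M[C]_n})
    (E : 'I_m -> 'M[C]_(k, n)) :
  kraus_tp E -> (channel_graph E <= S)%VS ->
  exists2 r, haemers_feasible S r & (r <= k)%N.
Proof.
move=> E_tp E_S; exists (\rank (\mxblock_(i < m, j < m) (ctr (E i) *m E j))).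
  exists m, (fun i j => ctr (E i) *m E j); split=> // i j.
  apply: (subvP E_S); apply: memv_span.
  by apply: (allpairs_f (fun i j => ctr (E i) *m E j)); rewrite mem_enum.
exact: mxrank_mxblock_mul.
Qed.

Local Open Scope ereal_scope.

Lemma alpha_ge0 (n : nat) (S : {vspace 'M[C]_n}) : 0 <= alpha S.
Proof.
apply: ereal_sup_ubound; exists 0%N => //.
by exists (fun _ => 0%R); split => [[]|[]].
Qed.

Lemma alpha_le_haemers_feasible (n : nat) (S : {vspace 'M[C]_n}) (r : nat) :
  haemers_feasible S r -> alpha S <= r%:R%:E.
Proof.
move=> Sr; apply: ge_ereal_sup => _ [l Sl <-].
by rewrite lee_fin ler_nat (indep_family_le_haemers Sl Sr).
Qed.

Lemma alpha_tpow_root_le (n : nat) (S : {vspace 'M[C]_n}) (r k : nat) :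
  haemers_feasible S r -> poweR (alpha (tpow S k)) (k.+1%:R^-1) <= r%:R%:E.
Proof.
move=> Sr; have [r' Sr' le_r'] := haemers_feasible_tpow k Sr.
have := alpha_le_haemers_feasible Sr'; have := alpha_ge0 (tpow S k).
case: (alpha (tpow S k)) => [a| |] //=; rewrite !lee_fin => a_ge0 le_ar'.
have -> : (r%:R = (r ^ k.+1)%:R `^ (k.+1%:R^-1) :> R)%R.
  by rewrite natrX -powR_mulrn // -powRrM mulfV // powRr1.
apply: ge0_ler_powR; rewrite ?invr_ge0 ?nnegrE //.
by rewrite (le_trans le_ar') // ler_nat.
Qed.

End NCGraphBounds.

Local Open Scope ereal_scope.

Theorem mainTheorem3 (R : realType) (n : nat) (S : {vspace 'M[R[i]]_n}) :
  nc_graph S ->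
  alpha S <= shannon_cap S /\ shannon_cap S <= haemers S /\ haemers S <= orth_rank S.
Proof.
move=> _; split; [|split].
- apply: le_trans (ereal_sup_ubound _); last by exists 0%N.
  by rewrite invr1 poweRe1 // alpha_ge0.
- apply: le_ereal_inf_tmp => _ [r Sr <-]; apply: ge_ereal_sup => _ [k _ <-].
  exact: alpha_tpow_root_le.
- apply: le_ereal_inf_tmp => _ [k [m [E [E_tp E_S]]] <-].
  have [r Sr le_rk] := haemers_feasible_channel E_tp E_S.
  apply: le_trans (ereal_inf_lbound _) _; first by exists r.
  by rewrite lee_fin ler_nat.
Qed.
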